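(* Let $A$ be a real matrix with $m$ rows, and let $S, T$ be finite sets of unit vectors in $\mathbb{R}^m$ with $S$ nonempty, $f_A(S) \ge f_A(T)$ and $f_A(S) > 0$. Then there exists $v \in S$ such that $$f_A(T \cup \{v\}) - f_A(T) \ge \sigma_{\min}(S)\, \frac{\big(f_A(S) - f_A(T)\big)^2}{4|S|\, f_A(S)}.$$
   Context: For a finite set $V$ of vectors in $\mathbb{R}^m$, $\Pi_V$ denotes the orthogonal projector onto $\mathrm{span}(V)$, and for a matrix $M$ with $m$ rows, $f_M(V) = \|\Pi_V M\|_F^2$. For a finite set $V$ of unit vectors, $\sigma_{\min}(V)$ is the smallest squared singular value of the matrix with columns $V$, i.e. $\inf_{\|x\|_2 = 1} \|Mx\|_2^2$ for that matrix $M$. *)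

From HB Require Import structures.
From mathcomp Require Import all_boot all_order all_algebra.
From mathcomp Require Import finmap.
From mathcomp Require Import boolp classical_sets reals.
Set Implicit Arguments. Unset Strict Implicit. Unset Printing Implicit Defensive.
Import Order.TTheory GRing.Theory Num.Theory.
Local Open Scope ring_scope.
Local Open Scope fset_scope.

Section Defs.
Variable R : realType.

Definition sqnorm (k : nat) (x : 'cV[R]_k) : R := \sum_(i < k) x i 0 ^+ 2.

Definition frob2 (p q : nat) (M : 'M[R]_(p, q)) : R :=
  \sum_(i < p) \sum_(j < q) M i j ^+ 2.

Definition rows_of (m : nat) (V : {fset 'cV[R]_m}) : 'M[R]_(size (V : seq _), m) :=
  \matrix_(i < size (V : seq _)) (nth 0 (V : seq _) i)^T.

Definition cols_of (m : nat) (V : {fset 'cV[R]_m}) : 'M[R]_(m, size (V : seq _)) :=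
  (rows_of V)^T.

(* Orthogonal projector onto span(V): with B a basis (row-free matrix) of the
   row space of rows_of V, i.e. of span(V), Pi_V = B^T (B B^T)^{-1} B. *)
Definition proj (m : nat) (V : {fset 'cV[R]_m}) : 'M[R]_m :=
  let B := row_base (rows_of V) in B^T *m invmx (B *m B^T) *m B.

Definition fM (m n : nat) (M : 'M[R]_(m, n)) (V : {fset 'cV[R]_m}) : R :=
  frob2 (proj V *m M).

(* smallest squared singular value of the matrix with columns V *)
Definition sigma_min (m : nat) (V : {fset 'cV[R]_m}) : R :=
  inf [set sqnorm (cols_of V *m x) | x in [set x : 'cV[R]_(size (V : seq _)) | sqnorm x = 1]].

End Defs.

From HB Require Import structures.
From mathcomp Require Import all_boot all_order all_algebra.
From mathcomp Require Import finmap.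
From mathcomp Require Import boolp classical_sets reals.
From mathcomp Require Import ring lra.
Set Implicit Arguments. Unset Strict Implicit. Unset Printing Implicit Defensive.
Import Order.TTheory GRing.Theory Num.Theory.
Local Open Scope ring_scope.

(* Write Q = 1 - Pi_T. Adding a unit vector v to T raises f_A by at least
   |v^T Q A|_F^2, because the increment is |(Pi_{T+v} - Pi_T) A|_F^2 and Q v lies
   in the range of the projector Pi_{T+v} - Pi_T. Summing over v in S gives
   |S^T Q A|_F^2 >= sigma_min(S) |Pi_S Q A|_F^2. Splitting
   f_A(S) = <Pi_S A, Pi_T A> + <Pi_S A, Q A> and applying Cauchy-Schwarz to both
   terms yields (f_A(S) - f_A(T))^2 <= 4 f_A(S) |Pi_S Q A|_F^2. The best v in S
   does at least as well as the average. *)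

Lemma col_mulmx (R : pzSemiRingType) p q r (A : 'M[R]_(p, q)) (B : 'M[R]_(q, r)) j :
  col j (A *m B) = A *m col j B.
Proof. by rewrite !colE mulmxA. Qed.

Section FrobeniusInnerProduct.
Variable R : realType.

Definition mxdot (p q : nat) (X Y : 'M[R]_(p, q)) : R := \tr (X^T *m Y).

Lemma frob2_mxdot p q (X : 'M[R]_(p, q)) : frob2 X = mxdot X X.
Proof.
rewrite /frob2 /mxdot /mxtrace exchange_big /=; apply: eq_bigr => j _.
by rewrite mxE; apply: eq_bigr => i _; rewrite mxE expr2.
Qed.

Lemma sqnorm_frob2 k (x : 'cV[R]_k) : sqnorm x = frob2 x.
Proof. by apply: eq_bigr => i _; rewrite big_ord1. Qed.

Lemma sqnorm_mxdot k (x : 'cV[R]_k) : sqnorm x = mxdot x x.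
Proof. by rewrite sqnorm_frob2 frob2_mxdot. Qed.

Lemma mxdotC p q (X Y : 'M[R]_(p, q)) : mxdot X Y = mxdot Y X.
Proof. by rewrite /mxdot -mxtrace_tr trmx_mul trmxK. Qed.

Lemma mxdotMl p q r (M : 'M[R]_(p, r)) (X : 'M[R]_(r, q)) Y :
  mxdot (M *m X) Y = mxdot X (M^T *m Y).
Proof. by rewrite /mxdot trmx_mul mulmxA. Qed.

Lemma mxdotBr p q (X Y Z : 'M[R]_(p, q)) : mxdot Z (X - Y) = mxdot Z X - mxdot Z Y.
Proof. by rewrite /mxdot mulmxBr linearB. Qed.

Lemma mxdotBl p q (X Y Z : 'M[R]_(p, q)) : mxdot (X - Y) Z = mxdot X Z - mxdot Y Z.
Proof. by rewrite mxdotC mxdotBr !(mxdotC Z). Qed.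

Lemma mxdotZr p q a (X Z : 'M[R]_(p, q)) : mxdot Z (a *: X) = a * mxdot Z X.
Proof. by rewrite /mxdot -scalemxAr mxtraceZ. Qed.

Lemma mxdotZl p q a (X Z : 'M[R]_(p, q)) : mxdot (a *: X) Z = a * mxdot X Z.
Proof. by rewrite mxdotC mxdotZr mxdotC. Qed.

Lemma frob2_ge0 p q (X : 'M[R]_(p, q)) : 0 <= frob2 X.
Proof. by apply: sumr_ge0 => i _; apply: sumr_ge0 => j _; apply: sqr_ge0. Qed.

Lemma mxdot_ge0 p q (X : 'M[R]_(p, q)) : 0 <= mxdot X X.
Proof. by rewrite -frob2_mxdot frob2_ge0. Qed.

Lemma mxdot_eq0 p q (X : 'M[R]_(p, q)) : (mxdot X X == 0) = (X == 0).
Proof.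
apply/idP/eqP => [|->]; last by rewrite /mxdot mulmx0 mxtrace0.
rewrite -frob2_mxdot psumr_eq0 => [/allP X0|i _]; last first.
  by apply: sumr_ge0 => j _; apply: sqr_ge0.
apply/matrixP => i j; have /X0 : i \in index_enum 'I_p by rewrite mem_index_enum.
rewrite /= psumr_eq0 => [/allP Xi0|k _]; last exact: sqr_ge0.
have /Xi0 : j \in index_enum 'I_q by rewrite mem_index_enum.
by rewrite /= sqrf_eq0 mxE => /eqP.
Qed.

Lemma mxdot_sqr_le p q (X Y : 'M[R]_(p, q)) : mxdot X Y ^+ 2 <= mxdot X X * mxdot Y Y.
Proof.
have [->|Yn0] := eqVneq Y 0; first by rewrite /mxdot !mulmx0 mxtrace0 expr0n mulr0.
have Y_gt0 : 0 < mxdot Y Y by rewrite lt_def mxdot_eq0 Yn0 mxdot_ge0.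
have := mxdot_ge0 (mxdot Y Y *: X - mxdot X Y *: Y).
rewrite !(mxdotBl, mxdotBr, mxdotZl, mxdotZr) (mxdotC Y X) => expand_ge0.
have : 0 <= mxdot Y Y * (mxdot Y Y * mxdot X X - mxdot X Y ^+ 2) by nra.
by rewrite pmulr_rge0 // subr_ge0 mulrC.
Qed.

Lemma frob2_cols p q (X : 'M[R]_(p, q)) : frob2 X = \sum_j sqnorm (col j X).
Proof.
rewrite /frob2 exchange_big; apply: eq_bigr => j _.
by apply: eq_bigr => i _; rewrite mxE.
Qed.

Lemma frob2_rows p q (X : 'M[R]_(p, q)) : frob2 X = \sum_i frob2 (row i X).
Proof.
rewrite /frob2; apply: eq_bigr => i _.
by rewrite big_ord1; apply: eq_bigr => j _; rewrite mxE.
Qed.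

Lemma frob2_trmx_mul_le p q (w : 'cV[R]_p) (X : 'M[R]_(p, q)) :
  frob2 (w^T *m X) <= sqnorm w * frob2 X.
Proof.
rewrite !frob2_cols mulr_sumr; apply: ler_sum => j _.
have -> : sqnorm (col j (w^T *m X)) = mxdot w (col j X) ^+ 2.
  by rewrite /sqnorm /mxdot /mxtrace !big_ord1 col_mulmx !mxE.
by rewrite !sqnorm_mxdot mxdot_sqr_le.
Qed.

End FrobeniusInnerProduct.

Section OrthogonalProjector.
Variables (R : realType) (m : nat).
Implicit Types (P Q : 'M[R]_m) (v : 'cV[R]_m).

Definition ortho_projector P := P^T = P /\ P *m P = P.

Lemma ortho_projectorC P : ortho_projector P -> ortho_projector (1%:M - P).
Proof.
move=> [P_sym P_idem]; split; first by rewrite linearB /= trmx1 P_sym.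
by rewrite mulmxBl !mulmxBr !mul1mx mulmx1 P_idem subrr subr0.
Qed.

Lemma ortho_projectorB P Q : ortho_projector P -> ortho_projector Q ->
  Q *m P = P -> ortho_projector (Q - P).
Proof.
move=> [P_sym P_idem] [Q_sym Q_idem] QP; split; first by rewrite linearB /= P_sym Q_sym.
have PQ : P *m Q = P by rewrite -P_sym -Q_sym -trmx_mul QP.
by rewrite mulmxBl !mulmxBr Q_idem P_idem QP PQ subrr subr0.
Qed.

Lemma frob2_ortho_projector n P (X : 'M[R]_(m, n)) :
  ortho_projector P -> frob2 (P *m X) = mxdot X (P *m X).
Proof. by move=> [P_sym P_idem]; rewrite frob2_mxdot mxdotMl P_sym mulmxA P_idem. Qed.

Lemma sqnorm_ortho_projector_le P v : ortho_projector P -> sqnorm (P *m v) <= sqnorm v.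
Proof.
move=> Pp; have := frob2_ge0 ((1%:M - P) *m v).
rewrite (frob2_ortho_projector _ (ortho_projectorC Pp)) mulmxBl mul1mx mxdotBr.
by rewrite -(frob2_ortho_projector _ Pp) -sqnorm_mxdot subr_ge0 !sqnorm_frob2.
Qed.

End OrthogonalProjector.

Section SpanProjector.
Variables (R : realType) (m : nat).
Implicit Types V W : {fset 'cV[R]_m}.

Lemma row_free_mul_tr_unit k (B : 'M[R]_(k, m)) : row_free B -> B *m B^T \in unitmx.
Proof.
move=> freeB; rewrite -row_free_unit -kermx_eq0; apply/eqP.
set K := kermx _; have KBBt : K *m (B *m B^T) = 0 by rewrite mulmx_ker.
have /eqP : mxdot (K *m B)^T (K *m B)^T = 0.
  by rewrite /mxdot trmxK trmx_mul mulmxA -(mulmxA K) KBBt mul0mx mxtrace0.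
rewrite mxdot_eq0 trmx_eq0 => /eqP KB0.
by apply: (row_free_inj freeB); rewrite KB0 mul0mx.
Qed.

Lemma proj_unit V : row_base (rows_of V) *m (row_base (rows_of V))^T \in unitmx.
Proof. exact/row_free_mul_tr_unit/row_base_free. Qed.

Lemma proj_ortho_projector V : ortho_projector (proj V).
Proof.
rewrite /proj; have := proj_unit V; move: (row_base _) => B BBt_unit; split.
  by rewrite !trmx_mul trmxK trmx_inv trmx_mul trmxK mulmxA.
by rewrite -!mulmxA (mulmxA B B^T) mulKVmx.
Qed.

Lemma proj_sub V : (proj V <= rows_of V)%MS.
Proof. by rewrite (submx_trans (submxMl _ _)) // eq_row_base. Qed.

Lemma mulmx_proj p (Y : 'M[R]_(p, m)) V : (Y <= rows_of V)%MS -> Y *m proj V = Y.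
Proof.
move=> sY; have : (Y <= row_base (rows_of V))%MS.
  by rewrite (submx_trans sY) // eq_row_base.
case/submxP => Z ->; rewrite /proj.
have := proj_unit V; move: (row_base _) => B BBt_unit.
by rewrite -!mulmxA (mulmxA B B^T) mulKVmx.
Qed.

Lemma rows_of_mem V v : v \in V -> (v^T <= rows_of V)%MS.
Proof.
move=> vV; have vS : (index v V < size (V : seq _))%N by rewrite index_mem.
have -> : v^T = row (Ordinal vS) (rows_of V) by rewrite /rows_of rowK nth_index.
exact: row_sub.
Qed.

Lemma rows_of_subset V W : {subset V <= W} -> (rows_of V <= rows_of W)%MS.
Proof. by move=> sVW; apply/row_subP => i; rewrite rowK rows_of_mem // sVW ?mem_nth. Qed.

Lemma proj_mul_subset V W : {subset V <= W} -> proj W *m proj V = proj V.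
Proof.
move=> sVW; have [V_sym _] := proj_ortho_projector V.
have [W_sym _] := proj_ortho_projector W.
rewrite -V_sym -W_sym -trmx_mul mulmx_proj //.
exact/(submx_trans (proj_sub V))/rows_of_subset.
Qed.

Lemma proj_mem V v : v \in V -> proj V *m v = v.
Proof.
move=> vV; have [V_sym _] := proj_ortho_projector V.
by apply: trmx_inj; rewrite trmx_mul V_sym mulmx_proj // rows_of_mem.
Qed.

End SpanProjector.

Section SmallestSingularValue.
Variables (R : realType) (m : nat).
Implicit Types V S : {fset 'cV[R]_m}.

Lemma sqnormZ k a (x : 'cV[R]_k) : sqnorm (a *: x) = a ^+ 2 * sqnorm x.
Proof. by rewrite !sqnorm_mxdot mxdotZl mxdotZr mulrA expr2. Qed.

Lemma sigma_min_le V (x : 'cV[R]_(size (V : seq _))) :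
  sqnorm x = 1 -> sigma_min V <= sqnorm (cols_of V *m x).
Proof.
move=> x1; apply: ge_inf; last by exists x.
by exists 0 => _ [y _ <-]; rewrite sqnorm_mxdot mxdot_ge0.
Qed.

Lemma sigma_min_ge0 V : 0 <= sigma_min V.
Proof.
rewrite /sigma_min; set E := (X in inf X).
have [->|/set0P nE] := eqVneq E set0; first by rewrite inf0.
apply: (@lb_le_inf R _ _ nE) => _ [y _ <-]; by rewrite sqnorm_mxdot mxdot_ge0.
Qed.

Lemma sigma_min_sqnorm V (x : 'cV[R]_(size (V : seq _))) :
  sigma_min V * sqnorm x <= sqnorm (cols_of V *m x).
Proof.
have [x0|x_neq0] := eqVneq (sqnorm x) 0.
  by rewrite x0 mulr0 sqnorm_mxdot mxdot_ge0.
have x_gt0 : 0 < sqnorm x by rewrite lt_def x_neq0 sqnorm_mxdot mxdot_ge0.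
set c := (Num.sqrt (sqnorm x))^-1.
have c2 : c ^+ 2 = (sqnorm x)^-1 by rewrite exprVn sqr_sqrtr // ltW.
have := sigma_min_le (x := c *: x).
rewrite -scalemxAr !sqnormZ c2 mulVf // => /(_ erefl).
by rewrite -(ler_pM2l x_gt0) mulrA mulfV // mul1r mulrC.
Qed.

Lemma sigma_min_frob2 V q (X : 'M[R]_(size (V : seq _), q)) :
  sigma_min V * frob2 X <= frob2 (cols_of V *m X).
Proof.
rewrite !frob2_cols mulr_sumr; apply: ler_sum => j _.
by rewrite col_mulmx sigma_min_sqnorm.
Qed.

Lemma sigma_min_proj S q (Y : 'M[R]_(m, q)) :
  sigma_min S * frob2 (proj S *m Y) <= frob2 (rows_of S *m Y).
Proof.
set Z := proj S *m Y; set G := rows_of S *m Y.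
have [PS_sym _] := proj_ortho_projector S.
have : (Z^T <= rows_of S)%MS.
  by rewrite trmx_mul PS_sym (submx_trans (submxMl _ _)) // proj_sub.
case/submxP => X ZtE; have ZE : Z = cols_of S *m X^T by rewrite -trmx_mul -ZtE trmxK.
have zE : frob2 Z = mxdot X^T G.
  by rewrite frob2_mxdot {1}ZE mxdotMl trmxK mulmxA mulmx_proj.
have CS : frob2 Z ^+ 2 <= frob2 X^T * frob2 G by rewrite zE !frob2_mxdot mxdot_sqr_le.
have sigmaX : sigma_min S * frob2 X^T <= frob2 Z by rewrite ZE sigma_min_frob2.
have [->|z_neq0] := eqVneq (frob2 Z) 0; first by rewrite mulr0 frob2_ge0.
have z_gt0 : 0 < frob2 Z by rewrite lt_def z_neq0 frob2_ge0.
have G_ge0 := frob2_ge0 G; have sigma_ge0 := sigma_min_ge0 S.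
by rewrite -(ler_pM2r z_gt0); nra.
Qed.

End SmallestSingularValue.

Lemma sqr_sub_le_split (R : realFieldType) (s t N a b : R) : 0 <= t <= s ->
  a + b = s -> a ^+ 2 <= s * t -> b ^+ 2 <= s * N -> (s - t) ^+ 2 <= 4 * s * N.
Proof.
move=> /andP[t_ge0 ts] ab a2 b2.
(* AM-GM: 2 a <= 2 sqrt (s t) <= s + t, hence s - t <= 2 b. *)
have a_le : 2 * a <= s + t.
  have : (2 * a) ^+ 2 <= (s + t) ^+ 2 by nra.
  have : 0 <= s + t by lra.
  nra.
nra.
Qed.

Section GreedyStep.
Variables (R : realType) (m n : nat) (A : 'M[R]_(m, n)).

Lemma fM_setU1_sub_ge (T : {fset 'cV[R]_m}) v :
  sqnorm v <= 1 ->
  frob2 (v^T *m (1%:M - proj T) *m A) <= fM A (T `|` [fset v])%fset - fM A T.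
Proof.
move=> v_le1; set W := (T `|` [fset v])%fset; set Q := 1%:M - proj T.
have TW : {subset T <= W} by move=> x xT; rewrite in_fsetU xT.
have PWPT := proj_mul_subset TW.
have [_ PT_idem] := proj_ortho_projector T.
have Qp : ortho_projector Q by apply/ortho_projectorC/proj_ortho_projector.
have Dp : ortho_projector (proj W - proj T).
  by apply: ortho_projectorB => //; apply: proj_ortho_projector.
have gainE : fM A W - fM A T = frob2 ((proj W - proj T) *m A).
  rewrite /fM (frob2_ortho_projector _ Dp) mulmxBl mxdotBr.
  by rewrite !(frob2_ortho_projector _ (proj_ortho_projector _)).
have DQv : (proj W - proj T) *m (Q *m v) = Q *m v.
  have DQ : (proj W - proj T) *m Q = proj W - proj T.
    by rewrite mulmxBr mulmx1 mulmxBl PWPT PT_idem subrr subr0.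
  rewrite mulmxA DQ mulmxBl mulmxBl mul1mx proj_mem //.
  by rewrite in_fsetU in_fset1 eqxx orbT.
have -> : v^T *m Q *m A = (Q *m v)^T *m ((proj W - proj T) *m A).
  by rewrite -{1}(proj1 Qp) -trmx_mul -{1}DQv trmx_mul (proj1 Dp) mulmxA.
rewrite gainE; apply: le_trans (frob2_trmx_mul_le _ _) _.
apply: ler_piMl; first exact: frob2_ge0.
exact: le_trans (sqnorm_ortho_projector_le _ Qp) v_le1.
Qed.

Lemma fM_sub_sqr_le (S T : {fset 'cV[R]_m}) : fM A T <= fM A S ->
  (fM A S - fM A T) ^+ 2 <= 4 * fM A S * frob2 (proj S *m ((1%:M - proj T) *m A)).
Proof.
move=> TS; have [PS_sym PS_idem] := proj_ortho_projector S.
apply: (sqr_sub_le_split (a := mxdot (proj S *m A) (proj T *m A))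
                         (b := mxdot (proj S *m A) ((1%:M - proj T) *m A))).
- by rewrite TS /fM frob2_ge0.
- rewrite mulmxBl mul1mx mxdotBr addrC subrK mxdotC.
  by rewrite /fM (frob2_ortho_projector _ (proj_ortho_projector _)).
- by rewrite /fM !frob2_mxdot mxdot_sqr_le.
- have -> : mxdot (proj S *m A) ((1%:M - proj T) *m A) =
            mxdot (proj S *m A) (proj S *m ((1%:M - proj T) *m A)).
    by rewrite !(mxdotMl (proj S)) PS_sym (mulmxA (proj S) (proj S)) PS_idem.
  by rewrite /fM !frob2_mxdot mxdot_sqr_le.
Qed.

Lemma sigma_min_mul_le_sum_gain (S T : {fset 'cV[R]_m}) :
  (forall v, v \in S -> sqnorm v = 1) ->
  sigma_min S * frob2 (proj S *m ((1%:M - proj T) *m A)) <=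
    \sum_(i < size (S : seq _)) (fM A (T `|` [fset nth 0 S i])%fset - fM A T).
Proof.
move=> S_unit; apply: le_trans (sigma_min_proj S _) _.
rewrite frob2_rows; apply: ler_sum => i _.
rewrite row_mul rowK mulmxA fM_setU1_sub_ge // S_unit ?mem_nth //.
Qed.

End GreedyStep.

Lemma exists_ge_mean (R : realFieldType) k (F : 'I_k -> R) :
  (0 < k)%N -> exists i, (\sum_j F j) / k%:R <= F i.
Proof.
move=> k_gt0; have [i _ Fi_max] := @arg_maxP _ _ _ (Ordinal k_gt0) predT F isT.
exists i; rewrite ler_pdivrMr ?ltr0n //.
apply: (@le_trans _ _ (\sum_(j < k) F i)); first by apply: ler_sum => j _; apply: Fi_max.
by rewrite sumr_const card_ord mulr_natr.
Qed.

Local Open Scope fset_scope.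

Theorem lemma1 (R : realType) (m n : nat) (A : 'M[R]_(m, n))
  (S T : {fset 'cV[R]_m}) :
  (forall v, v \in S -> sqnorm v = 1) ->
  (forall v, v \in T -> sqnorm v = 1) ->
  S != fset0 ->
  fM A T <= fM A S ->
  0 < fM A S ->
  exists2 v, v \in S &
    sigma_min S * (fM A S - fM A T) ^+ 2 / (4 * (#|` S|)%:R * fM A S)
      <= fM A (T `|` [fset v]) - fM A T.
Proof.
move=> S_unit _; rewrite -cardfs_gt0 => S_gt0 TS fS_gt0.
have [i gain_i] := exists_ge_mean
  (fun i : 'I_#|` S| => fM A (T `|` [fset nth 0 S i]) - fM A T) S_gt0.
exists (nth 0 S i); first exact: mem_nth.
apply: le_trans gain_i; set k := (#|` S|)%:R; set D := fM A S - fM A T.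
have -> : sigma_min S * D ^+ 2 / (4 * k * fM A S) =
          sigma_min S * (D ^+ 2 / (4 * fM A S)) / k.
  by field; rewrite !gt_eqF ?ltr0n.
rewrite ler_pM2r ?invr_gt0 ?ltr0n //.
apply: le_trans (sigma_min_mul_le_sum_gain A T S_unit).
rewrite ler_wpM2l ?sigma_min_ge0 // ler_pdivrMr ?mulr_gt0 // mulrC.
exact: fM_sub_sqr_le.
Qed.
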